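(* Let $M$ be a pseudofinite $\mathcal{L}$-structure (an infinite ultraproduct of finite $\mathcal{L}$-structures) and $X\subseteq M^n$ an internal set. Suppose there is $r\in\mathbb{N}$ such that for every $\mathcal{L}$-formula $\varphi(x,y)$ over $\emptyset$ with $|x|=1$ and every $b\in M^{|y|}$, $\pmb{\delta}_X(\varphi(x,b))\in\{0,1,\dots,r\}$, and for each $i\le r$ the set $\{b\in M^{|y|}:\pmb{\delta}_X(\varphi(x,b))=i\}$ is $\emptyset$-definable. Then for every formula $\psi(x,y)$ and every $c\in M^{|y|}$, $\pmb{\delta}_X(\psi(x,c))\in\{0,\dots,|x|\cdot r\}$. Moreover, $\pmb{\delta}_X$ is definable.
   Context: For internal $D=\prod D_i/\mathcal{U}$, $|D|=(|D_i|)/\mathcal{U}\in\mathbb{R}^*$; for definable $A$, $\pmb{\delta}_X(A)=\mathrm{st}(\log|A|/\log|X|)$. $\pmb{\delta}_X$ is continuous if for every parameter-free formula $\phi(x,y)$ and reals $r_1<r_2$ there is a $\emptyset$-definable $D$ with $\{a:\pmb{\delta}_X(\phi(x,a))\le r_1\}\subseteq D\subseteq\{a:\pmb{\delta}_X(\phi(x,a))<r_2\}$; it is definable if it is continuous and for every parameter-free $\phi(x,y)$ the set $\{\pmb{\delta}_X(\phi(x,a)):a\in M^{|y|}\}$ is finite. *)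

From Stdlib Require Import Reals.
From Coquelicot Require Import Rbar.
From mathcomp Require Import all_boot.
From mathcomp Require Import boolp.
Open Scope nat_scope.

Set Implicit Arguments.
Unset Strict Implicit.
Unset Printing Implicit Defensive.

Record language := Language {
  Fsym : Type; fun_ar : Fsym -> nat;
  Rsym : Type; rel_ar : Rsym -> nat }.

Inductive term (L : language) : Type :=
  | tvar : nat -> term L
  | tapp : forall f : Fsym L, ('I_(fun_ar f) -> term L) -> term L.

(* Formulas (with equality); variables are named by natural numbers.
   Other connectives/quantifiers are definable from these. There are no
   parameter constants: every formula is over the empty set. *)
Inductive formula (L : language) : Type :=
  | fEq  : term L -> term L -> formula L
  | fRel : forall r : Rsym L, ('I_(rel_ar r) -> term L) -> formula L
  | fNot : formula L -> formula L
  | fAnd : formula L -> formula L -> formula L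
  | fEx  : nat -> formula L -> formula L.

Fixpoint tfree (L : language) (j : nat) (t : term L) : Prop :=
  match t with
  | tvar k => j = k
  | tapp f args => exists i, tfree j (args i)
  end.

Fixpoint free (L : language) (j : nat) (phi : formula L) : Prop :=
  match phi with
  | fEq t1 t2 => tfree j t1 \/ tfree j t2
  | fRel r args => exists i, tfree j (args i)
  | fNot p => free j p
  | fAnd p q => free j p \/ free j q
  | fEx x p => j <> x /\ free j p
  end.

Definition fv_lt (L : language) (k : nat) (phi : formula L) : Prop :=
  forall j, free j phi -> (j < k)%N.

(* A structure is given with the relation interpreting the equality   *)
(* symbol (actual equality for genuine structures; the ultrafilter    *)
(* congruence for the ultraproduct, presented as a setoid).           *)

Record structure (L : language) := Structure {
  scar : Type;
  seqr : scar -> scar -> Prop;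
  sfun : forall f : Fsym L, ('I_(fun_ar f) -> scar) -> scar;
  srel : forall r : Rsym L, ('I_(rel_ar r) -> scar) -> Prop }.

Fixpoint teval (L : language) (S : structure L) (v : nat -> scar S)
  (t : term L) : scar S :=
  match t with
  | tvar k => v k
  | tapp f args => @sfun L S f (fun j => teval v (args j))
  end.

Fixpoint sat (L : language) (S : structure L) (v : nat -> scar S)
  (phi : formula L) : Prop :=
  match phi with
  | fEq t1 t2 => @seqr L S (teval v t1) (teval v t2)
  | fRel r args => @srel L S r (fun j => teval v (args j))
  | fNot p => ~ sat v p
  | fAnd p q => sat v p /\ sat v q
  | fEx x p => exists a : scar S, sat (fun k => if k == x then a else v k) p
  end.

(* valuation from an n-tuple a (variables 0..n-1) followed by an
   m-tuple b (variables n..n+m-1); w is an irrelevant default. *)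
Definition ext (T : Type) (w : T) (n : nat) (a : 'I_n -> T) (k : nat) : T :=
  match (insub k : option 'I_n) with Some j => a j | None => w end.

Definition tval (T : Type) (w : T) (n m : nat) (a : 'I_n -> T)
  (b : 'I_m -> T) : nat -> T :=
  fun k => if (k < n)%N then ext w a k else ext w b (k - n).

(* Finite L-structures (nonempty, as usual: fs_wit is a witness). *)
Record finStructure (L : language) := FinStructure {
  fs_car : finType;
  fs_wit : fs_car;
  fs_fun : forall f : Fsym L, ('I_(fun_ar f) -> fs_car) -> fs_car;
  fs_rel : forall r : Rsym L, ('I_(rel_ar r) -> fs_car) -> Prop }.

Definition fin_struct (L : language) (A : finStructure L) : structure L :=
  {| scar := fs_car A; seqr := fun x y => x = y;
     sfun := @fs_fun L A; srel := @fs_rel L A |}.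

Record ultrafilter (I : Type) := Ultrafilter {
  uf : (I -> Prop) -> Prop;
  uf_T : uf (fun _ => True);
  uf_0 : ~ uf (fun _ => False);
  uf_up : forall A B : I -> Prop, (forall i, A i -> B i) -> uf A -> uf B;
  uf_cap : forall A B : I -> Prop, uf A -> uf B -> uf (fun i => A i /\ B i);
  uf_ultra : forall A : I -> Prop, uf A \/ uf (fun i => ~ A i) }.

Unset Implicit Arguments.

Section Ultraproduct.
Variables (L : language) (I : Type) (U : ultrafilter I)
          (M : I -> finStructure L).

Definition ultraprod : structure L :=
  {| scar := forall i, fs_car (M i);
     seqr := fun a b => uf U (fun i => a i = b i);
     sfun := fun f args i => @fs_fun L (M i) f (fun j => args j i);
     srel := fun r args => uf U (fun i => @fs_rel L (M i) r (fun j => args j i)) |}.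

Definition ultraprod_wit : scar ultraprod := fun i => fs_wit (M i).

Definition definable0 (m : nat) (D : ('I_m -> scar ultraprod) -> Prop) : Prop :=
  exists theta : formula L, fv_lt m theta /\
    forall b : 'I_m -> scar ultraprod, D b <-> @sat L ultraprod (ext ultraprod_wit b) theta.

(* ultralimit of a sequence in the extended reals along U; for a sequence
   of reals this is the standard part of its class in R^* *)
Definition ulim (s : I -> Rbar) (t : Rbar) : Prop :=
  match t with
  | Rbar.Finite r => forall eps : R, Rlt 0 eps ->
      uf U (fun i => exists x : R, s i = Rbar.Finite x /\ Rlt (Rabs (Rminus x r)) eps)
  | p_infty => forall K : R, uf U (fun i => Rbar_lt (Rbar.Finite K) (s i))
  | m_infty => forall K : R, uf U (fun i => Rbar_lt (s i) (Rbar.Finite K))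
  end.

Variables (d : nat) (X : forall i, {set {ffun 'I_d -> fs_car (M i)}}).

Definition fiber_card (n m : nat) (psi : formula L) (c : 'I_m -> scar ultraprod)
  (i : I) : nat :=
  #|[set a : {ffun 'I_n -> fs_car (M i)} |
      `[< @sat L (fin_struct (M i)) (tval (fs_wit (M i)) (fun j => a j)
                                        (fun j => c j i)) psi >] ]|.

Definition delta_ratio (n m : nat) (psi : formula L) (c : 'I_m -> scar ultraprod)
  (i : I) : Rbar :=
  if fiber_card n m psi c i == 0%N then m_infty
  else Rbar.Finite (Rdiv (ln (INR (fiber_card n m psi c i))) (ln (INR #|X i|))).

Definition delta_is (n m : nat) (psi : formula L) (c : 'I_m -> scar ultraprod)
  (t : Rbar) : Prop := ulim (delta_ratio n m psi c) t.

Definition delta_continuous : Prop :=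
  forall (n m : nat) (psi : formula L), fv_lt (n + m) psi ->
  forall r1 r2 : R, Rlt r1 r2 ->
  exists D : ('I_m -> scar ultraprod) -> Prop, definable0 m D /\
    (forall a, (exists t, delta_is n m psi a t /\ Rbar_le t (Rbar.Finite r1)) -> D a) /\
    (forall a, D a -> exists t, delta_is n m psi a t /\ Rbar_lt t (Rbar.Finite r2)).

Definition delta_definable : Prop :=
  delta_continuous /\
  forall (n m : nat) (psi : formula L), fv_lt (n + m) psi ->
  exists vals : list Rbar,
    forall (a : 'I_m -> scar ultraprod) (t : Rbar), delta_is n m psi a t -> List.In t vals.

End Ultraproduct.

Arguments ultraprod {L I} U M.
Arguments ultraprod_wit {L I} U M _.
Arguments definable0 {L I} U M m D.
Arguments ulim {I} U s t.
Arguments fiber_card {L I} U M n m psi c i.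
Arguments delta_ratio {L I} U M {d} X n m psi c i.
Arguments delta_is {L I} U M {d} X n m psi c t.
Arguments delta_continuous {L I} U M {d} X.
Arguments delta_definable {L I} U M {d} X.

(* Induction on the length n of the tuple x, proving at once that
   delta_X(psi(x, c)) lies in {-oo, 0, ..., n r} and that each of its level sets
   is 0-definable.  Write psi(x0, x', y) with |x'| = n and let theta_k(x', y)
   define the set where delta_X(psi(x0; x', y)) = k.  By Los and a choice of
   counterexamples in each factor, for almost all i every x' in theta_k(M_i, c)
   has a fibre of size |X_i|^(k +- eps), and every x' with a nonempty fibre
   lies in some theta_k(M_i, c).  Summing over x', |psi(M_i, c)| is at least
   |theta_k(M_i, c)| |X_i|^(k - eps) and at most
   (r + 1) max_k |theta_k(M_i, c)| |X_i|^(k + eps); the factor r + 1 is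
   negligible because |X_i| is unbounded (M is infinite while
   delta_X(x = x) <= r).  Hence delta_X(psi(x, c)) is the maximum of
   delta_X(theta_k(x', c)) + k, so its level sets are Boolean combinations of
   those of the theta_k.  With finitely many values, each on a definable set,
   continuity and definability of delta_X follow. *)

From Pilot Require Import Defs.
From Stdlib Require Import Reals Lra.
From Coquelicot Require Import Rbar.
From mathcomp Require Import all_boot.
From mathcomp Require Import boolp.
Set Implicit Arguments.
Unset Strict Implicit.
Local Open Scope nat_scope.

Lemma partial_choice (I : Type) (T : I -> Type) (w : forall i, T i)
    (P : forall i, T i -> Prop) :
  exists a : forall i, T i, forall i, (exists b, P i b) -> P i (a i).
Proof.
have H i : exists b : T i, (exists b, P i b) -> P i b.
  case: (pselect (exists b, P i b)) => [[b hb]|nP]; first by exists b.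
  by exists (w i).
by exists (fun i => proj1_sig (cid (H i))) => i; apply: (proj2_sig (cid (H i))).
Qed.

Section UltrafilterFacts.
Variables (I : Type) (U : ultrafilter I).

Lemma uf_notE (A : I -> Prop) : ~ uf U A <-> uf U (fun i => ~ A i).
Proof.
split; first by case: (uf_ultra U A).
move=> nA hA; apply: (@uf_0 _ U); apply: uf_up (uf_cap hA nA) => i [] //.
Qed.

Lemma uf_andE (A B : I -> Prop) : uf U A /\ uf U B <-> uf U (fun i => A i /\ B i).
Proof.
split; first by case=> ??; apply: uf_cap.
by move=> h; split; apply: uf_up h => i [].
Qed.

Lemma uf_forall_lt (K : nat) (A : nat -> I -> Prop) :
  (forall k, k < K -> uf U (A k)) -> uf U (fun i => forall k, k < K -> A k i).
Proof.
elim: K => [|K IH] h; first by apply: uf_up (uf_T U) => i _ k.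
apply: uf_up (uf_cap (IH (fun k hk => h k (ltnW hk))) (h K (ltnSn K))).
by move=> i [h1 h2] k; rewrite ltnS leq_eqVlt => /orP [/eqP -> //|]; apply: h1.
Qed.

Lemma uf_witness (A : I -> Prop) : uf U A -> exists i, A i.
Proof.
move=> h; apply: contrapT => nA; apply: (@uf_0 _ U); apply: uf_up h => i hi.
by apply: nA; exists i.
Qed.

Local Open Scope R_scope.
Lemma ulim_unique (s : I -> Rbar) (t t' : Rbar) : ulim U s t -> ulim U s t' -> t = t'.
Proof.
have cap2 A B : uf U A -> uf U B -> exists i, A i /\ B i.
  by move=> hA hB; apply: uf_witness; apply: uf_cap.
case: t => [x||]; case: t' => [y||] //= h h'.
- case: (Req_dec x y) => [-> //|nxy].
  have he : (0 < Rabs (x - y) / 2).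
    by apply: Rdiv_lt_0_compat; [apply: Rabs_pos_lt; lra|lra].
  have [i [[u [e hu]] [v [e' hv]]]] := cap2 _ _ (h _ he) (h' _ he).
  by move: hu hv; rewrite e in e'; case: e' => <-; split_Rabs; lra.
- have [i [[u [e hu]] hK]] := cap2 _ _ (h _ Rlt_0_1) (h' (x + 1)).
  by move: hu hK; rewrite e /=; split_Rabs; lra.
- have [i [[u [e hu]] hK]] := cap2 _ _ (h _ Rlt_0_1) (h' (x - 1)).
  by move: hu hK; rewrite e /=; split_Rabs; lra.
- have [i [hK [u [e hu]]]] := cap2 _ _ (h (y + 1)) (h' _ Rlt_0_1).
  by move: hu hK; rewrite e /=; split_Rabs; lra.
- have [i [hK hK']] := cap2 _ _ (h 0) (h' 0).
  by move: hK hK'; case: (s i) => //= z; lra.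
- have [i [hK [u [e hu]]]] := cap2 _ _ (h (y - 1)) (h' _ Rlt_0_1).
  by move: hu hK; rewrite e /=; split_Rabs; lra.
- have [i [hK hK']] := cap2 _ _ (h 0) (h' 0).
  by move: hK hK'; case: (s i) => //= z; lra.
Qed.

End UltrafilterFacts.


Section Valuations.
Variable T : Type.

Definition tcat n m (x : 'I_n -> T) (c : 'I_m -> T) : 'I_(n + m) -> T :=
  fun j => match split j with inl a => x a | inr b => c b end.

Lemma ext_lt (w : T) n (x : 'I_n -> T) k (lt_kn : k < n) : ext w x k = x (Ordinal lt_kn).
Proof. by rewrite /ext insubT. Qed.

Lemma ext_ge (w : T) n (x : 'I_n -> T) k : n <= k -> ext w x k = w.
Proof. by move=> le_nk; rewrite /ext insubF // ltnNge le_nk. Qed.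

Lemma ext_tcat (w : T) n m (x : 'I_n -> T) (c : 'I_m -> T) :
  ext w (tcat x c) =1 Defs.tval w x c.
Proof.
move=> k; rewrite /Defs.tval; case: (ltnP k n) => [lt_kn|le_nk].
  rewrite (ext_lt _ _ (leq_trans lt_kn (leq_addr _ _))) (ext_lt _ _ lt_kn) /tcat.
  case: splitP => j /= ej; first by congr x; apply: val_inj.
  by exfalso; have := lt_kn; rewrite ej ltnNge leq_addr.
case: (ltnP k (n + m)) => [lt_knm|le_nmk]; last by rewrite !ext_ge // leq_subRL.
have lt_k_m : k - n < m by rewrite ltn_subLR.
rewrite (ext_lt _ _ lt_knm) (ext_lt _ _ lt_k_m) /tcat; case: splitP => j /= ej.
  by exfalso; have := ltn_ord j; rewrite -ej ltnNge le_nk.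
by congr c; apply: val_inj; rewrite /= ej addKn.
Qed.

Lemma tval_cons (w : T) n m (h : 'I_n.+1 -> T) (c : 'I_m -> T) :
  Defs.tval w h c =1
  Defs.tval w (fun _ : 'I_1 => h ord0) (tcat (fun j : 'I_n => h (lift ord0 j)) c).
Proof.
case=> [|k]; first by rewrite /Defs.tval /= !(ext_lt _ _ (ltn0Sn _)); congr h; apply: val_inj.
rewrite [RHS]/Defs.tval /= subSS subn0 ext_tcat /Defs.tval ltnS; case: (ltnP k n) => [lt_kn|_].
  by rewrite (ext_lt _ _ lt_kn) (ext_lt _ _ (lt_kn : k.+1 < n.+1)); congr h; apply: val_inj.
by rewrite subSS.
Qed.

Lemma tval_nil (w : T) m (h : 'I_0 -> T) (c : 'I_m -> T) : Defs.tval w h c =1 ext w c.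
Proof. by move=> k; rewrite /Defs.tval /= subn0. Qed.

End Valuations.

Lemma ext_pointwise (I : Type) (T : I -> Type) (w : forall i, T i) n
    (x : 'I_n -> forall i, T i) k i :
  ext w x k i = ext (w i) (fun j => x j i) k.
Proof. by rewrite /ext; case: insub. Qed.

Lemma tcat_pointwise (I : Type) (T : I -> Type) n m (x : 'I_n -> forall i, T i)
    (c : 'I_m -> forall i, T i) i :
  (fun j => tcat x c j i) = tcat (fun j => x j i) (fun j => c j i).
Proof. by apply: funext => j; rewrite /tcat; case: split. Qed.


Section Ultraproduct.
Variables (L : language) (I : Type) (U : ultrafilter I) (M : I -> finStructure L).
Local Notation UP := (ultraprod U M).
Local Notation FS i := (fin_struct (M i)).

Lemma sat_ext (S : structure L) (v w : nat -> scar S) (phi : formula L) :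
  v =1 w -> sat v phi <-> sat w phi.
Proof. by move=> /funext ->. Qed.

Lemma teval_ultraprod (v : nat -> scar UP) (t : term L) (i : I) :
  teval v t i = teval (S := FS i) (fun k => v k i) t.
Proof. by elim: t => [k|f args IH] //=; congr fs_fun; apply: funext => j. Qed.

Theorem los (phi : formula L) (v : nat -> scar UP) :
  sat v phi <-> uf U (fun i => sat (S := FS i) (fun k => v k i) phi).
Proof.
elim: phi v => [t1 t2|R args|p IH|p IHp q IHq|x p IH] v /=.
- by split; apply: uf_up => i; rewrite !teval_ultraprod.
- have e i : (fun j => teval v (args j) i)
              = (fun j => teval (S := FS i) (fun k => v k i) (args j)).
    by apply: funext => j; apply: teval_ultraprod.
  by split; apply: uf_up => i; rewrite e.
- by rewrite IH; apply: uf_notE.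
- by rewrite IHp IHq; apply: uf_andE.
- have upd (a : scar UP) i : (fun k => (if k == x then a else v k) i)
                           = (fun k => if k == x then a i else v k i).
    by apply: funext => k; case: (k == x).
  split=> [[a /IH ha]|h].
    by apply: uf_up ha => i; rewrite upd; exists (a i).
  have [a ha] := partial_choice (fun i => fs_wit (M i))
    (fun i b => sat (S := FS i) (fun k => if k == x then b else v k i) p).
  by exists a; apply/IH; apply: uf_up h => i /ha; rewrite upd.
Qed.

(* The counterexamples chosen in each factor form a tuple of the ultraproduct. *)
Lemma uf_forall_ffun n (P : forall i, {ffun 'I_n -> fs_car (M i)} -> Prop) :
  (forall x : 'I_n -> scar UP, uf U (fun i => P i [ffun j => x j i])) ->
  uf U (fun i => forall x', P i x').
Proof.
move=> Px; case: (uf_ultra U (fun i => forall x', P i x')) => // notP; exfalso.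
have [y hy] := partial_choice (fun i => [ffun _ => fs_wit (M i)]) (fun i x' => ~ P i x').
have ey i : [ffun j => y i j] = y i by apply/ffunP => j; rewrite ffunE.
have : ~ uf U (fun i => P i [ffun j => y i j]).
  by apply/uf_notE; apply: uf_up notP => i /existsNP nPi; rewrite ey; apply: hy.
by apply; apply: Px.
Qed.

Lemma ultraprod_card_ge (a : nat -> scar UP) :
  (forall j j', seqr (a j) (a j') -> j = j') ->
  forall K, uf U (fun i => K <= #|fs_car (M i)|).
Proof.
move=> a_inj K.
have : uf U (fun i => forall j, j < K -> forall j', j' < K -> j <> j' -> a j i <> a j' i).
  apply: uf_forall_lt => j _; apply: uf_forall_lt => j' _.
  case: (pselect (j = j')) => [<-|neq]; first by apply: uf_up (uf_T U).
  have /uf_notE : ~ uf U (fun i => a j i = a j' i) by move/a_inj.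
  by apply: uf_up => i ne_ai _.
apply: uf_up => i distinct; rewrite -[K]card_ord.
apply: (@leq_card _ _ (fun j : 'I_K => a j i)) => j j' e; apply: val_inj.
by apply: contrapT => neq; apply: distinct e.
Qed.

Lemma los_ext m (phi : formula L) (c : 'I_m -> scar UP) :
  sat (ext (ultraprod_wit U M) c) phi <->
  uf U (fun i => sat (S := fin_struct (M i)) (ext (fs_wit (M i)) (fun j => c j i)) phi).
Proof.
have e i : (fun k => ext (ultraprod_wit U M) c k i) = ext (fs_wit (M i)) (fun j => c j i).
  by apply: funext => k; rewrite ext_pointwise.
by rewrite los; split; apply: uf_up => i; rewrite e.
Qed.

Lemma definable0_ext m (D D' : ('I_m -> scar UP) -> Prop) :
  definable0 U M m D -> (forall b, D b <-> D' b) -> definable0 U M m D'.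
Proof. by move=> [th [fv h]] e; exists th; split=> // b; rewrite -e. Qed.

Lemma definable0_not m (D : ('I_m -> scar UP) -> Prop) :
  definable0 U M m D -> definable0 U M m (fun b => ~ D b).
Proof. by move=> [th [fv h]]; exists (fNot th); split=> // b /=; rewrite h. Qed.

Lemma definable0_and m (D E : ('I_m -> scar UP) -> Prop) :
  definable0 U M m D -> definable0 U M m E -> definable0 U M m (fun b => D b /\ E b).
Proof.
move=> [th [fv h]] [th' [fv' h']]; exists (fAnd th th'); split.
  by move=> j /= [] ?; [apply: fv|apply: fv'].
by move=> b /=; rewrite h h'.
Qed.

Lemma definable0_or m (D E : ('I_m -> scar UP) -> Prop) :
  definable0 U M m D -> definable0 U M m E -> definable0 U M m (fun b => D b \/ E b).
Proof.
move=> hD hE; apply: definable0_ext (definable0_not (definable0_and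
  (definable0_not hD) (definable0_not hE))) _ => b.
by split=> [?|]; [apply: contrapT; tauto|tauto].
Qed.

Lemma definable0_True m : definable0 U M m (fun _ => True).
Proof.
exists (fEx 0 (fEq (tvar L 0) (tvar L 0))); split; first by move=> j /= [+ []] => /[swap] <-.
by move=> b /=; split=> // _; exists (ultraprod_wit U M); apply: uf_up (uf_T U).
Qed.

Lemma definable0_False m : definable0 U M m (fun _ => False).
Proof. by apply: definable0_ext (definable0_not (definable0_True m)) _ => b; tauto. Qed.

Lemma definable0_constl m (Q : Prop) (D : ('I_m -> scar UP) -> Prop) :
  definable0 U M m D -> definable0 U M m (fun b => Q /\ D b).
Proof.
move=> hD; case: (pselect Q) => hQ.
  by apply: definable0_ext hD _ => b; tauto.
by apply: definable0_ext (definable0_False m) _ => b; tauto.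
Qed.

Lemma definable0_exists_lt m (K : nat) (P : nat -> ('I_m -> scar UP) -> Prop) :
  (forall k, k < K -> definable0 U M m (P k)) ->
  definable0 U M m (fun b => exists2 k, k < K & P k b).
Proof.
elim: K => [|K IH] h.
  by apply: definable0_ext (definable0_False m) _ => b; split=> // [[]].
apply: definable0_ext (definable0_or (IH (fun k hk => h k (ltnW hk))) (h K (ltnSn K))) _.
move=> b; split=> [[[k hk e]|e]|[k]]; [by exists k => //; apply: ltnW|by exists K|].
rewrite ltnS leq_eqVlt => /orP [/eqP -> | hk] e; [by right|by left; exists k].
Qed.

Lemma definable0_forall_lt m (K : nat) (P : nat -> ('I_m -> scar UP) -> Prop) :
  (forall k, k < K -> definable0 U M m (P k)) ->
  definable0 U M m (fun b => forall k, k < K -> P k b).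
Proof.
move=> h; apply: definable0_ext (definable0_not (@definable0_exists_lt _ K
  (fun k b => ~ P k b) (fun k hk => definable0_not (h k hk)))) _ => b.
split=> [nP k hk|hP [k hk]]; last by apply; apply: hP.
by apply: contrapT => nPk; apply: nP; exists k.
Qed.

End Ultraproduct.

Section Counting.
Variable T : finType.

Lemma card_ffun1 (P : pred T) :
  #|[set a : {ffun 'I_1 -> T} | P (a ord0)]| = #|[set y | P y]|.
Proof.
have app0_inj : injective (fun a : {ffun 'I_1 -> T} => a ord0).
  by move=> a b e; apply/ffunP => j; rewrite [j]ord1.
rewrite -(card_imset _ app0_inj); apply: eq_card => y; rewrite inE.
apply/imsetP/idP => [[a]|Py]; first by rewrite inE => Pa ->.
by exists [ffun _ => y]; rewrite ?inE ffunE.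
Qed.

Lemma card_ffunS n (R : T -> {ffun 'I_n -> T} -> bool) :
  #|[set a : {ffun 'I_n.+1 -> T} | R (a ord0) [ffun j => a (lift ord0 j)]]| =
  \sum_(x' : {ffun 'I_n -> T}) #|[set y | R y x']|.
Proof.
pose split0 (a : {ffun 'I_n.+1 -> T}) := (a ord0, [ffun j => a (lift ord0 j)]).
pose join0 (p : T * {ffun 'I_n -> T}) : {ffun 'I_n.+1 -> T} :=
  [ffun j => if unlift ord0 j is Some j' then p.2 j' else p.1].
have split0K : cancel split0 join0.
  by move=> a; apply/ffunP => j; rewrite ffunE; case: unliftP => [j'|] ->; rewrite ?ffunE.
have join0K : cancel join0 split0.
  by case=> y x'; rewrite /split0 ffunE unlift_none; congr pair; apply/ffunP => j;
     rewrite !ffunE liftK.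
rewrite -(card_imset _ (can_inj split0K)).
have -> : split0 @: [set a : {ffun 'I_n.+1 -> T} | R (a ord0) [ffun j => a (lift ord0 j)]]
          = [set p | R p.1 p.2].
  apply/setP => p; rewrite inE; apply/imsetP/idP => [[a]|Rp]; first by rewrite inE => ? ->.
  exists (join0 p); last by rewrite join0K.
  by rewrite inE; have : R (split0 (join0 p)).1 (split0 (join0 p)).2 by rewrite join0K.
rewrite -sum1_card (eq_bigl (fun p => R p.1 p.2)) => [|p]; last by rewrite inE.
rewrite -(pair_big_dep xpredT R (fun _ _ => 1)) (exchange_big_dep xpredT) //=.
by apply: eq_bigr => x' _; rewrite sum1_card; apply: eq_card => y; rewrite inE.
Qed.

Lemma card_mul_min_le_sum (F : T -> nat) (S : {set T}) (x0 : T) : x0 \in S ->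
  exists2 xm, xm \in S & #|S| * F xm <= \sum_x F x.
Proof.
move=> Sx0; case: (arg_minnP F Sx0) => xm Sxm min_xm; exists xm => //.
rewrite -sum_nat_const (@leq_trans (\sum_(x in S) F x)) ?leq_sum //.
by rewrite [leqRHS](bigID (mem S)) leq_addr.
Qed.

Lemma sum_le_cover_max (F : T -> nat) r (S : nat -> {set T}) :
  (forall x, 0 < F x -> exists2 k, k < r.+1 & x \in S k) -> 0 < \sum_x F x ->
  exists2 k, k < r.+1 & exists2 xk, xk \in S k & \sum_x F x <= r.+1 * (#|S k| * F xk).
Proof.
move=> cover sum_gt0; pose Fm k := \max_(x in S k) F x.
have le_sum_cover : \sum_x F x <= \sum_(k < r.+1) #|S k| * Fm k.
  apply: (@leq_trans (\sum_x \sum_(k < r.+1) (if x \in S k then F x else 0))).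
    apply: leq_sum => x _; case: (posnP (F x)) => [-> //|/cover [k lt_kr Skx]].
    by rewrite (bigD1 (Ordinal lt_kr)) //= Skx leq_addr.
  rewrite exchange_big; apply: leq_sum => k _; rewrite -big_mkcond -sum_nat_const.
  by apply: leq_sum => x Skx; apply: leq_bigmax_cond.
have [k0 max_k0] := @eq_bigmax _ (fun k : 'I_r.+1 => #|S k| * Fm k) ltac:(by rewrite card_ord).
have le_max : \sum_(k < r.+1) #|S k| * Fm k <= r.+1 * (#|S k0| * Fm k0).
  rewrite -max_k0 -[X in X * _](card_ord r.+1) -sum_nat_const.
  by apply: leq_sum => k _; apply: (leq_bigmax (F := fun k : 'I_r.+1 => #|S k| * Fm k)).
have : 0 < #|S k0| * Fm k0.
  by rewrite lt0n; apply: contraTneq (leq_trans le_sum_cover le_max) => ->; rewrite -ltnNge muln0.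
rewrite muln_gt0 => /andP [/(eq_bigmax_cond F) [xk Sxk Fm_xk] _].
by exists k0 => //; exists xk => //; rewrite -Fm_xk (leq_trans le_sum_cover).
Qed.

End Counting.

Local Open Scope R_scope.

Lemma ln_INR_le (a b : nat) : (0 < a)%N -> (a <= b)%N -> ln (INR a) <= ln (INR b).
Proof.
move=> a_gt0 /leP/le_INR; case/Rle_lt_or_eq_dec => [lt_ab|-> //]; last exact: Rle_refl.
by apply/Rlt_le/ln_increasing => //; apply: (lt_INR 0); apply/ltP.
Qed.

Lemma ln_INR_ge0 (n : nat) : (0 < n)%N -> 0 <= ln (INR n).
Proof. by move=> n_gt0; rewrite -ln_1; apply: (ln_INR_le (a := 1)). Qed.

Lemma ln_INR_gt0 (n : nat) : (1 < n)%N -> 0 < ln (INR n).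
Proof.
by move=> n_gt1; rewrite -ln_1; apply: ln_increasing; [lra|apply: (lt_INR 1); apply/ltP].
Qed.

Lemma ln_INR_mul (a b : nat) : (0 < a)%N -> (0 < b)%N ->
  ln (INR (a * b)) = ln (INR a) + ln (INR b).
Proof. by move=> /ltP/(lt_INR 0) a_gt0 /ltP/(lt_INR 0) b_gt0; rewrite mult_INR ln_mult. Qed.

Lemma Rabs_div_sub_lt (a b x eps : R) : 0 < b ->
  Rabs (a / b - x) < eps <-> (x - eps) * b < a /\ a < (x + eps) * b.
Proof.
move=> b_gt0; have {2 3}-> : a = a / b * b by field; lra.
by split; set q := a / b; split_Rabs; try split; nra.
Qed.

Section GrowthExponent.
Variables (I : Type) (U : ultrafilter I) (lnX : I -> R).

Definition exponent_lb (s : I -> nat) (t : R) : Prop := forall eps, 0 < eps ->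
  uf U (fun i => (0 < s i)%N /\ (t - eps) * lnX i < ln (INR (s i))).

Definition exponent_ub (s : I -> nat) (t : R) : Prop := forall eps, 0 < eps ->
  uf U (fun i => (0 < s i)%N -> ln (INR (s i)) < (t + eps) * lnX i).

Lemma exponent_eq1 (s : I -> nat) : uf U (fun i => 0 < lnX i) -> uf U (fun i => s i = 1%N) ->
  exponent_lb s 0 /\ exponent_ub s 0.
Proof.
move=> lnX_gt0 s1; split=> eps eps_gt0; apply: uf_up (uf_cap s1 lnX_gt0) => i [-> lnX_pos];
  rewrite /= ln_1; have := Rmult_lt_0_compat _ _ eps_gt0 lnX_pos; [split=> //|]; lra.
Qed.

Lemma exponent_ub0 (s : I -> nat) (t : R) : uf U (fun i => s i = 0%N) -> exponent_ub s t.
Proof. by move=> s0 eps _; apply: uf_up s0 => i ->. Qed.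

Lemma exponent_ub_le (s : I -> nat) (t t' : R) :
  uf U (fun i => 0 <= lnX i) -> t <= t' -> exponent_ub s t -> exponent_ub s t'.
Proof.
move=> lnX_ge0 le_tt' ub eps eps_gt0; apply: uf_up (uf_cap (ub _ eps_gt0) lnX_ge0).
by move=> i [h ?] /h; nra.
Qed.

End GrowthExponent.

Section ExponentOfSum.
Variables (I : Type) (U : ultrafilter I) (lnX : I -> R) (r : nat).
Variables (N : I -> nat) (G : nat -> I -> nat).
Hypothesis lnX_unbounded : forall B, uf U (fun i => B < lnX i).
Hypothesis N_ge : forall k, (k < r.+1)%N -> forall eps, 0 < eps -> uf U (fun i =>
  (0 < G k i)%N -> (0 < N i)%N /\ ln (INR (G k i)) + (INR k - eps) * lnX i < ln (INR (N i))).
Hypothesis N_le : forall eps, 0 < eps -> uf U (fun i => (0 < N i)%N ->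
  exists2 k, (k < r.+1)%N & (0 < G k i)%N /\
     ln (INR (N i)) <= ln (INR r.+1) + ln (INR (G k i)) + (INR k + eps) * lnX i).

Lemma sum_count_eq0 : (forall k, (k < r.+1)%N -> uf U (fun i => G k i = 0%N)) ->
  uf U (fun i => N i = 0%N).
Proof.
move=> G0; apply: uf_up (uf_cap (uf_forall_lt G0) (N_le Rlt_0_1)) => i [G0i le_N].
by case: (posnP (N i)) => // /le_N [k /G0i -> []].
Qed.

Lemma exponent_lb_sum k t : (k < r.+1)%N ->
  exponent_lb U lnX (G k) t -> exponent_lb U lnX N (t + INR k).
Proof.
move=> lt_kr lb eps eps_gt0; have eps2_gt0 : 0 < eps / 2 by lra.
apply: uf_up (uf_cap (lb _ eps2_gt0) (N_ge lt_kr eps2_gt0)) => i [[G_gt0 lbG] /(_ G_gt0)].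
by case=> N_gt0 lbN; split=> //; lra.
Qed.

Lemma exponent_ub_sum t : (forall k, (k < r.+1)%N -> exponent_ub U lnX (G k) (t - INR k)) ->
  exponent_ub U lnX N t.
Proof.
move=> ub eps eps_gt0; have eps3_gt0 : 0 < eps / 3 by lra.
have ubG := uf_forall_lt (fun k lt_kr => ub k lt_kr _ eps3_gt0).
have ln_r_small := lnX_unbounded (3 * ln (INR r.+1) / eps).
apply: uf_up (uf_cap (uf_cap ubG ln_r_small) (N_le eps3_gt0)) => i [[ubGi big] le_N].
move=> /le_N [k lt_kr [G_gt0 leN]]; have := ubGi k lt_kr G_gt0.
have : ln (INR r.+1) < eps / 3 * lnX i.
  have -> : ln (INR r.+1) = eps / 3 * (3 * ln (INR r.+1) / eps) by field; lra.
  exact: Rmult_lt_compat_l.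
by lra.
Qed.

End ExponentOfSum.

Section DeltaIs.
Variables (L : language) (I : Type) (U : ultrafilter I) (M : I -> finStructure L).
Variables (d : nat) (X : forall i, {set {ffun 'I_d -> fs_car (M i)}}).
Hypothesis X_gt1 : uf U (fun i => (1 < #|X i|)%N).
Local Notation lnX := (fun i => ln (INR #|X i|)).

Lemma lnX_gt0 : uf U (fun i => 0 < lnX i).
Proof. by apply: uf_up X_gt1 => i; apply: ln_INR_gt0. Qed.

Lemma delta_is_m_inftyE n m psi c :
  delta_is U M X n m psi c m_infty <-> uf U (fun i => fiber_card U M n m psi c i = 0%N).
Proof.
rewrite /delta_is /ulim /delta_ratio; split=> [/(_ 0) h|h K]; last first.
  by apply: uf_up h => i ->; rewrite eqxx.
apply: uf_up (uf_cap h lnX_gt0) => i []; case: eqP => // /eqP; rewrite -lt0n /=.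
move=> /ln_INR_ge0 ln_ge0 ratio_lt0 lnX_pos; exfalso; move: ratio_lt0; apply: Rle_not_lt.
by apply: Rmult_le_pos => //; apply/Rlt_le/Rinv_0_lt_compat.
Qed.

Lemma delta_is_finiteE n m psi c t :
  delta_is U M X n m psi c (Rbar.Finite t) <->
  exponent_lb U lnX (fiber_card U M n m psi c) t /\
  exponent_ub U lnX (fiber_card U M n m psi c) t.
Proof.
rewrite /delta_is /ulim /delta_ratio; split=> [h|[lb ub] eps eps_gt0].
  split=> eps eps_gt0; apply: uf_up (uf_cap (h eps eps_gt0) lnX_gt0) => i [];
    case: eqP => [_ [? []] //|/eqP]; rewrite -lt0n => s_gt0 [_ [[<-]]] close lnX_pos;
    by move: close; rewrite Rabs_div_sub_lt //; case.
apply: uf_up (uf_cap (uf_cap (lb _ eps_gt0) (ub _ eps_gt0)) lnX_gt0).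
move=> i [[[s_gt0 lbi] /(_ s_gt0) ubi] lnX_pos]; rewrite (gtn_eqF s_gt0).
by eexists; split; first reflexivity; rewrite Rabs_div_sub_lt.
Qed.

Lemma delta_is_unique n m psi c t t' :
  delta_is U M X n m psi c t -> delta_is U M X n m psi c t' -> t = t'.
Proof. exact: ulim_unique. Qed.

End DeltaIs.

Local Open Scope nat_scope.

Section Corollary.
Variables (L : language) (I : Type) (U : ultrafilter I) (M : I -> finStructure L).
Variables (d : nat) (X : forall i, {set {ffun 'I_d -> fs_car (M i)}}).
Hypothesis X_gt1 : uf U (fun i => (1 < #|X i|)%N).
Variable r : nat.
Hypothesis M_infinite : exists a : nat -> scar (ultraprod U M),
  forall j j' : nat, @seqr L (ultraprod U M) (a j) (a j') -> j = j'.
Hypothesis H_values : forall (m : nat) (phi : formula L), fv_lt (1 + m) phi ->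
  forall b : 'I_m -> scar (ultraprod U M),
    delta_is U M X 1 m phi b m_infty \/
    exists k : nat, (k <= r)%N /\ delta_is U M X 1 m phi b (Rbar.Finite (INR k)).
Hypothesis H_def : forall (m : nat) (phi : formula L), fv_lt (1 + m) phi ->
  forall k : nat, (k <= r)%N ->
    definable0 U M m (fun b => delta_is U M X 1 m phi b (Rbar.Finite (INR k))).
Local Notation UP := (ultraprod U M).
Local Notation FS i := (fin_struct (M i)).
Local Notation lnX i := (ln (INR #|X i|)).
Local Notation delta := (delta_is U M X).

Lemma card_fs_gt0 i : 0 < #|fs_car (M i)|.
Proof. by apply/card_gt0P; exists (fs_wit (M i)). Qed.

Section LnXUnbounded.
Local Open Scope R_scope.

Lemma card_exponent_ub :
  exists2 k, (k <= r)%N & exponent_ub U (fun i => lnX i) (fun i => #|fs_car (M i)|) (INR k).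
Proof.
pose eq00 := fEq (tvar L 0) (tvar L 0).
have eq00_fv : fv_lt (1 + 0) eq00 by move=> j /= [] ->.
have card_eq00 b : fiber_card U M 1 0 eq00 b = fun i => #|fs_car (M i)|.
  apply: funext => i; rewrite /fiber_card -[RHS]expn1 -[in RHS](card_ord 1) -card_ffun.
  by rewrite -cardsT; apply: eq_card => a; rewrite !inE; apply/asboolP.
case: (H_values eq00_fv (fun _ => ultraprod_wit U M)) => [|[k [le_kr]]].
  move=> /(delta_is_m_inftyE X_gt1)/uf_witness [i]; rewrite card_eq00 => card0.
  by have := card_fs_gt0 i; rewrite card0.
by move=> /(delta_is_finiteE X_gt1) [_]; rewrite card_eq00 => ub; exists k.
Qed.

(* |M_i| exceeds every bound while |M_i| <= |X_i|^(r + 1) for almost all i. *)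
Lemma lnX_unbounded (B : R) : uf U (fun i => B < lnX i).
Proof.
have [k le_kr ub] := card_exponent_ub.
have [a a_inj] := M_infinite.
have [K ltK] := INR_unbounded (exp ((INR r + 1) * Rabs B)).
have K_gt0 : (0 < K)%N by case: K ltK => //=; have := exp_pos ((INR r + 1) * Rabs B); lra.
apply: uf_up (uf_cap (uf_cap (ub _ Rlt_0_1) (ultraprod_card_ge a_inj K)) (lnX_gt0 X_gt1)).
move=> i [[/(_ (card_fs_gt0 i)) ubi geK] lnX_pos].
have := ln_INR_le K_gt0 geK.
have : (INR r + 1) * Rabs B < ln (INR K).
  by rewrite -[X in X < _]ln_exp; apply: ln_increasing => //; apply: exp_pos.
have : INR k <= INR r by apply/le_INR/leP.
by have := Rle_abs B; have := pos_INR r; nra.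
Qed.

End LnXUnbounded.

Definition delta_tame n : Prop :=
  forall m (psi : formula L), fv_lt (n + m) psi ->
  (forall c, delta n m psi c m_infty \/
     exists k, k <= n * r /\ delta n m psi c (Rbar.Finite (INR k))) /\
  definable0 U M m (fun c => delta n m psi c m_infty) /\
  (forall k, definable0 U M m (fun c => delta n m psi c (Rbar.Finite (INR k)))).

Lemma fiber_card0 m psi (c : 'I_m -> scar UP) i : fiber_card U M 0 m psi c i =
  `[< sat (S := FS i) (ext (fs_wit (M i)) (fun j => c j i)) psi >].
Proof.
have e (a : {ffun 'I_0 -> fs_car (M i)}) :
  Defs.tval (fs_wit (M i)) (fun j => a j) (fun j => c j i) = ext (fs_wit (M i)) (fun j => c j i).
  exact/funext/tval_nil.
rewrite /fiber_card; case: asboolP => [sat_c|nsat_c].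
  transitivity #|[set: {ffun 'I_0 -> fs_car (M i)}]|.
    by apply: eq_card => a; rewrite !inE e; apply/asboolP.
  by rewrite cardsT card_ffun card_ord expn0.
by apply: eq_card0 => a; rewrite !inE e; apply/asboolP.
Qed.

Lemma delta0_sat m psi (c : 'I_m -> scar UP) :
  sat (ext (ultraprod_wit U M) c) psi -> delta 0 m psi c (Rbar.Finite (INR 0)).
Proof.
move=> /los_ext sat_c.
apply/(delta_is_finiteE X_gt1)/(exponent_eq1 (lnX_gt0 X_gt1)).
by apply: uf_up sat_c => i sat_ci; rewrite fiber_card0 asboolT.
Qed.

Lemma delta0_nsat m psi (c : 'I_m -> scar UP) :
  ~ sat (ext (ultraprod_wit U M) c) psi -> delta 0 m psi c m_infty.
Proof.
move=> nsat_c; apply/(delta_is_m_inftyE X_gt1).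
have /uf_notE : ~ uf U (fun i => sat (S := FS i) (ext (fs_wit (M i)) (fun j => c j i)) psi).
  by move/los_ext.
by apply: uf_up => i nsat_ci; rewrite fiber_card0 asboolF.
Qed.

Lemma delta_tame0 : delta_tame 0.
Proof.
move=> m psi psi_fv.
pose S (c : 'I_m -> scar UP) := sat (S := UP) (ext (ultraprod_wit U M) c) psi.
have S_def : definable0 U M m S by exists psi.
split; [|split].
- move=> c; case: (pselect (S c)) => [/delta0_sat|/delta0_nsat]; last by left.
  by right; exists 0.
- apply: definable0_ext (definable0_not S_def) _ => c.
  split=> [/delta0_nsat //|minf Sc]; by have := delta_is_unique (delta0_sat Sc) minf.
- move=> k; apply: definable0_ext (definable0_constl (k = 0) S_def) _ => c.
  split=> [[-> /delta0_sat //]|dk]; case: (pselect (S c)) => [Sc|nSc].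
    move: (delta_is_unique (delta0_sat Sc) dk) => -[e].
    by split=> //; apply: INR_eq; rewrite -e.
  by have := delta_is_unique (delta0_nsat nSc) dk.
Qed.

Section Step.
Variables (n m : nat) (psi : formula L) (theta : nat -> formula L).
Hypothesis psi_fv : fv_lt (1 + (n + m)) psi.
Hypothesis thetaE : forall k, k <= r -> forall b,
  delta 1 (n + m) psi b (Rbar.Finite (INR k)) <->
  sat (S := UP) (ext (ultraprod_wit U M) b) (theta k).

Section Slices.
Variable c : 'I_m -> scar UP.

Definition slice_card i (x' : {ffun 'I_n -> fs_car (M i)}) : nat :=
  #|[set a : {ffun 'I_1 -> fs_car (M i)} | `[< sat (S := FS i)
      (Defs.tval (fs_wit (M i)) (fun j => a j) (tcat (fun j => x' j) (fun j => c j i))) psi >]]|.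
Arguments slice_card : clear implicits.

Definition level k i : {set {ffun 'I_n -> fs_car (M i)}} :=
  [set x' : {ffun 'I_n -> fs_car (M i)} | `[< sat (S := FS i)
      (Defs.tval (fs_wit (M i)) (fun j => x' j) (fun j => c j i)) (theta k) >]].

Lemma card_level k i : #|level k i| = fiber_card U M n m (theta k) c i.
Proof. by []. Qed.

Lemma fiber_card_succ i :
  fiber_card U M n.+1 m psi c i = \sum_(x' : {ffun 'I_n -> fs_car (M i)}) slice_card i x'.
Proof.
pose R y (x' : {ffun 'I_n -> fs_car (M i)}) := `[< sat (S := FS i)
  (Defs.tval (fs_wit (M i)) (fun _ : 'I_1 => y) (tcat (fun j => x' j) (fun j => c j i))) psi >].
transitivity (\sum_(x' : {ffun 'I_n -> fs_car (M i)}) #|[set y | R y x']|).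
  rewrite -card_ffunS; apply: eq_card => a; rewrite !inE /R.
  apply: asbool_equiv_eq; apply: sat_ext => k; rewrite tval_cons.
  by congr Defs.tval; congr tcat; apply: funext => j; rewrite ffunE.
apply: eq_bigr => x' _; rewrite -card_ffun1; apply: eq_card => a; rewrite !inE /R.
apply: asbool_equiv_eq; apply: sat_ext => k.
by congr Defs.tval; apply: funext => j; rewrite [j]ord1.
Qed.

Lemma fiber_card_slice (x : 'I_n -> scar UP) i :
  fiber_card U M 1 (n + m) psi (tcat x c) i = slice_card i [ffun j => x j i].
Proof.
rewrite /fiber_card /slice_card tcat_pointwise.
by have -> : (fun j => [ffun j => x j i] j) = (fun j => x j i) by apply: funext => j; rewrite ffunE.
Qed.

Lemma sat_level k (x : 'I_n -> scar UP) :
  sat (S := UP) (ext (ultraprod_wit U M) (tcat x c)) (theta k) <->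
  uf U (fun i => [ffun j => x j i] \in level k i).
Proof.
have e i : (fun j => [ffun j => x j i] j) = (fun j => x j i) by apply: funext => j; rewrite ffunE.
rewrite los_ext; split; apply: uf_up => i; rewrite inE e tcat_pointwise (funext (ext_tcat _ _ _));
  by move/asboolP.
Qed.

Section SliceBounds.
Local Open Scope R_scope.

Lemma slice_exponent k eps : (k <= r)%N -> 0 < eps -> uf U (fun i =>
  forall x', x' \in level k i -> (0 < slice_card i x')%N /\
    ((INR k - eps) * lnX i < ln (INR (slice_card i x')) /\
     ln (INR (slice_card i x')) < (INR k + eps) * lnX i)).
Proof.
move=> le_kr eps_gt0; apply: uf_forall_ffun => x.
case: (uf_ultra U (fun i => [ffun j => x j i] \in level k i)) => [|notin]; last first.
  by apply: uf_up notin => i notin_i /notin_i.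
move=> /sat_level/(thetaE le_kr)/(delta_is_finiteE X_gt1) [lb ub].
apply: uf_up (uf_cap (lb _ eps_gt0) (ub _ eps_gt0)) => i [[pos lbi] /(_ pos) ubi] _.
by rewrite -fiber_card_slice.
Qed.

Lemma slice_covered : uf U (fun i =>
  forall x', (0 < slice_card i x')%N -> exists2 k, (k < r.+1)%N & x' \in level k i).
Proof.
apply: uf_forall_ffun => x.
case: (H_values psi_fv (tcat x c)) => [|[k [le_kr /(thetaE le_kr)/sat_level]]].
  by move/(delta_is_m_inftyE X_gt1); apply: uf_up => i; rewrite fiber_card_slice => ->.
by apply: uf_up => i in_level _; exists k.
Qed.

Lemma fiber_card_succ_ge k : (k < r.+1)%N -> forall eps, 0 < eps -> uf U (fun i =>
  (0 < fiber_card U M n m (theta k) c i)%N -> (0 < fiber_card U M n.+1 m psi c i)%N /\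
  ln (INR (fiber_card U M n m (theta k) c i)) + (INR k - eps) * lnX i <
  ln (INR (fiber_card U M n.+1 m psi c i))).
Proof.
move=> lt_kr eps eps_gt0; apply: uf_up (slice_exponent lt_kr eps_gt0) => i slices.
rewrite -card_level => level_gt0; have /card_gt0P [x0 in0] := level_gt0.
have [xm in_m] := card_mul_min_le_sum (slice_card i) in0; rewrite -fiber_card_succ => le_sum.
have [slice_gt0 [lb_slice _]] := slices xm in_m.
have prod_gt0 : (0 < #|level k i| * slice_card i xm)%N by rewrite muln_gt0 level_gt0.
split; first exact: leq_trans prod_gt0 le_sum.
by have := ln_INR_le prod_gt0 le_sum; rewrite ln_INR_mul //; lra.
Qed.

Lemma fiber_card_succ_le eps : 0 < eps -> uf U (fun i =>
  (0 < fiber_card U M n.+1 m psi c i)%N -> exists2 k, (k < r.+1)%N &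
    (0 < fiber_card U M n m (theta k) c i)%N /\
    ln (INR (fiber_card U M n.+1 m psi c i)) <=
     ln (INR r.+1) + ln (INR (fiber_card U M n m (theta k) c i)) + (INR k + eps) * lnX i).
Proof.
move=> eps_gt0.
have slices := uf_forall_lt (K := r.+1) (fun k lt_kr => slice_exponent lt_kr eps_gt0).
apply: uf_up (uf_cap slice_covered slices) => i [covered {}slices].
move=> N_gt0; have [k lt_kr [xk in_k]] := sum_le_cover_max covered
  (leq_trans N_gt0 (eq_leq (fiber_card_succ i))); rewrite -fiber_card_succ => le_max.
have [slice_gt0 [_ ub_slice]] := slices k lt_kr xk in_k.
have level_gt0 : (0 < #|level k i|)%N by apply/card_gt0P; exists xk.
rewrite card_level in level_gt0 le_max; exists k => //; split=> //.
have := ln_INR_le N_gt0 le_max; rewrite !ln_INR_mul // ?muln_gt0 ?level_gt0 ?slice_gt0 //.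
(* the two copies of ln |X_i| differ in hidden coercions, which lra does not see through *)
move: ub_slice; set lx := ln (INR #|X i|); lra.
Qed.

End SliceBounds.

End Slices.

Lemma delta_succ_m_infty c : (forall k, k < r.+1 -> delta n m (theta k) c m_infty) ->
  delta n.+1 m psi c m_infty.
Proof.
move=> minf; apply/(delta_is_m_inftyE X_gt1)/(sum_count_eq0 (fiber_card_succ_le c)) => k lt_kr.
exact/(delta_is_m_inftyE X_gt1)/minf.
Qed.

Lemma delta_succ_finite c j k0 v0 : k0 < r.+1 ->
  delta n m (theta k0) c (Rbar.Finite (INR v0)) -> v0 + k0 = j ->
  (forall k, k < r.+1 -> delta n m (theta k) c m_infty \/
     exists2 v, v + k <= j & delta n m (theta k) c (Rbar.Finite (INR v))) ->
  delta n.+1 m psi c (Rbar.Finite (INR j)).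
Proof.
move=> lt_k0r /(delta_is_finiteE X_gt1) [lb0 _] <- levels.
apply/(delta_is_finiteE X_gt1); split.
  by rewrite plus_INR; apply: (exponent_lb_sum (fiber_card_succ_ge c) lt_k0r).
apply: (exponent_ub_sum lnX_unbounded (fiber_card_succ_le c)) => k lt_kr.
case: (levels k lt_kr) => [/(delta_is_m_inftyE X_gt1)/exponent_ub0 //|[v le_vk]].
move=> /(delta_is_finiteE X_gt1) [_]; apply: exponent_ub_le.
  by apply: uf_up (lnX_gt0 X_gt1) => i /Rlt_le.
by have /leP/le_INR := le_vk; rewrite !plus_INR; lra.
Qed.

Hypothesis theta_fv : forall k, k <= r -> fv_lt (n + m) (theta k).
Hypothesis tame_n : delta_tame n.

Definition attained c j := exists2 k, k < r.+1 & exists2 v, v < (n * r).+1 &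
  v + k = j /\ delta n m (theta k) c (Rbar.Finite (INR v)).

Lemma attained_le c j : attained c j -> j <= n * r + r.
Proof. by case=> k lt_kr [v lt_v [<- _]]; rewrite leq_add. Qed.

Lemma delta_succ_cases c :
  (delta n.+1 m psi c m_infty /\ forall k, k < r.+1 -> delta n m (theta k) c m_infty) \/
  exists j, [/\ attained c j, forall j', attained c j' -> j' <= j &
                delta n.+1 m psi c (Rbar.Finite (INR j))].
Proof.
case: (pselect (forall k, k < r.+1 -> delta n m (theta k) c m_infty)) => [minf|].
  by left; split=> //; apply: delta_succ_m_infty.
move=> /existsNP [k0 /not_implyP [lt_k0r not_minf]]; right.
have levels k (lt_kr : k < r.+1) := (tame_n (theta_fv lt_kr)).1 c.
have [v0 [le_v0 d0]] : exists v0, v0 <= n * r /\ delta n m (theta k0) c (Rbar.Finite (INR v0)).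
  by case: (levels k0 lt_k0r).
have ex_att : exists j, `[< attained c j >].
  by exists (v0 + k0); apply/asboolP; exists k0 => //; exists v0.
have [j /asboolP att_j max_j] := ex_maxnP ex_att (fun j att => attained_le (asboolW att)).
exists j; split=> // [j' /asboolP/max_j //|].
case: att_j => k1 lt_k1r [v1 _ [e1 d1]]; apply: (delta_succ_finite lt_k1r d1 e1) => k lt_kr.
case: (levels k lt_kr) => [|[v [le_v dv]]]; [by left|right; exists v => //].
by apply: max_j; apply/asboolP; exists k => //; exists v.
Qed.

Lemma delta_succ_values c : delta n.+1 m psi c m_infty \/
  exists j, j <= n.+1 * r /\ delta n.+1 m psi c (Rbar.Finite (INR j)).
Proof.
case: (delta_succ_cases c) => [[minf _]|[j [att_j _ dj]]]; [by left|right; exists j].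
by split=> //; rewrite mulSn addnC; apply: attained_le att_j.
Qed.

Lemma definable_delta_succ_m_infty : definable0 U M m (fun c => delta n.+1 m psi c m_infty).
Proof.
have levels_def k (lt_kr : k < r.+1) := (tame_n (theta_fv lt_kr)).2.1.
apply: definable0_ext (definable0_forall_lt levels_def) _ => c.
split=> [|minf]; first exact: delta_succ_m_infty.
case: (delta_succ_cases c) => [[] //|[j [_ _ dj]]].
by have := delta_is_unique minf dj.
Qed.

Lemma definable_attained j : definable0 U M m (fun c => attained c j).
Proof.
apply: definable0_exists_lt => k lt_kr; apply: definable0_exists_lt => v _.
exact/definable0_constl/(tame_n (theta_fv lt_kr)).2.2.
Qed.

Lemma definable_delta_succ j :
  definable0 U M m (fun c => delta n.+1 m psi c (Rbar.Finite (INR j))).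
Proof.
have maximal_def : definable0 U M m (fun c =>
    forall j', j' < (n * r + r).+1 -> ~ (j < j' /\ attained c j')).
  apply: definable0_forall_lt => j' _.
  exact/definable0_not/definable0_constl/definable_attained.
apply: definable0_ext (definable0_and (definable_attained j) maximal_def) _ => c.
case: (delta_succ_cases c) => [[minf levels_minf]|[j0 [att_j0 max_j0 dj0]]].
  split=> [[[k lt_kr [v _ [_ dv]]] _]|dj]; last by have := delta_is_unique minf dj.
  by have := delta_is_unique (levels_minf k lt_kr) dv.
split=> [[att_j maximal]|dj].
  suff -> : j = j0 by [].
  apply/eqP; rewrite eqn_leq max_j0 //= leqNgt; apply/negP => lt_j_j0.
  by apply: (maximal j0 _ (conj lt_j_j0 att_j0)); rewrite ltnS (attained_le att_j0).
move: (delta_is_unique dj dj0) => -[/INR_eq ->].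
by split=> // j' _ [lt_j0j' /max_j0]; rewrite leqNgt lt_j0j'.
Qed.

End Step.

Lemma delta_tame_succ n : delta_tame n -> delta_tame n.+1.
Proof.
move=> tame_n m psi psi_fv.
have psi_fv1 : fv_lt (1 + (n + m)) psi by move=> j /psi_fv; rewrite add1n addSn.
have /choice [theta theta_spec] : forall k, exists theta, k <= r ->
    fv_lt (n + m) theta /\ forall b, delta 1 (n + m) psi b (Rbar.Finite (INR k)) <->
                                    sat (S := UP) (ext (ultraprod_wit U M) b) theta.
  move=> k; case: (pselect (k <= r)) => [le_kr|]; last by exists psi.
  by have [theta] := H_def psi_fv1 le_kr; exists theta.
have thetaE k (le_kr : k <= r) := (theta_spec k le_kr).2.
have theta_fv k (le_kr : k <= r) := (theta_spec k le_kr).1.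
split; first exact: (delta_succ_values psi_fv1 thetaE theta_fv tame_n).
split; first exact: (definable_delta_succ_m_infty psi_fv1 thetaE theta_fv tame_n).
exact: (definable_delta_succ psi_fv1 thetaE theta_fv tame_n).
Qed.

Lemma delta_tame_all n : delta_tame n.
Proof. by elim: n => [|n /delta_tame_succ //]; apply: delta_tame0. Qed.

Lemma delta_is_continuous : delta_continuous U M X.
Proof.
move=> n m psi psi_fv r1 r2 lt_r12; have [values [minf_def fin_def]] := delta_tame_all psi_fv.
exists (fun c => delta n m psi c m_infty \/ exists2 k, k < (n * r).+1 &
  Rle (INR k) r1 /\ delta n m psi c (Rbar.Finite (INR k))).
split; [|split].
- apply: definable0_or minf_def _; apply: definable0_exists_lt => k _.
  exact/definable0_constl/fin_def.
- move=> c [t [dt le_t]]; case: (values c) => [minf|[k [le_k dk]]]; first by left.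
  by right; exists k => //; move: le_t; rewrite (delta_is_unique dt dk).
- move=> c [minf|[k _ [le_k dk]]]; first by exists m_infty.
  by exists (Rbar.Finite (INR k)); split=> //=; lra.
Qed.

Lemma delta_values_finite n m psi : fv_lt (n + m) psi ->
  exists vals : list Rbar, forall c t, delta n m psi c t -> List.In t vals.
Proof.
move=> psi_fv; have [values _] := delta_tame_all psi_fv.
exists (m_infty :: List.map (fun k => Rbar.Finite (INR k)) (List.seq 0 (n * r).+1)).
move=> c t dt; case: (values c) => [minf|[k [le_k dk]]]; [left|right].
  exact: delta_is_unique minf dt.
rewrite (delta_is_unique dt dk); apply: List.in_map; apply/List.in_seq.
by split; apply/leP.
Qed.

End Corollary.

Theorem corollary2p12 (L : language) (I : Type) (U : ultrafilter I)
  (M : I -> finStructure L)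
  (M_infinite : exists a : nat -> scar (ultraprod U M),
      forall j j' : nat, @seqr L (ultraprod U M) (a j) (a j') -> j = j')
  (d : nat) (X : forall i, {set {ffun 'I_d -> fs_car (M i)}})
  (X_log_nonzero : uf U (fun i => (1 < #|X i|)%N))
  (r : nat)
  (H_values : forall (m : nat) (phi : formula L), fv_lt (1 + m) phi ->
     forall b : 'I_m -> scar (ultraprod U M),
       delta_is U M X 1 m phi b m_infty \/
       exists k : nat, (k <= r)%N /\ delta_is U M X 1 m phi b (Rbar.Finite (INR k)))
  (H_def : forall (m : nat) (phi : formula L), fv_lt (1 + m) phi ->
     forall k : nat, (k <= r)%N ->
       definable0 U M m (fun b => delta_is U M X 1 m phi b (Rbar.Finite (INR k)))) :
  (forall (n m : nat) (psi : formula L), fv_lt (n + m) psi ->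
     forall c : 'I_m -> scar (ultraprod U M),
       delta_is U M X n m psi c m_infty \/
       exists k : nat, (k <= n * r)%N /\ delta_is U M X n m psi c (Rbar.Finite (INR k)))
  /\ delta_definable U M X.
Proof.
have tame := delta_tame_all X_log_nonzero M_infinite H_values H_def.
split; first by move=> n m psi /tame [].
split; first exact: (delta_is_continuous X_log_nonzero M_infinite H_values H_def).
exact: (delta_values_finite X_log_nonzero M_infinite H_values H_def).
Qed.
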